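(* Let $D$ be an API-domain whose conductor $[D:\overline{D}]$ is nonzero. Then $D\subseteq\overline{D}$ is a bounded root extension, and hence $\overline{D}$ is an API-domain. Consequently, if $D$ is a quasilocal API-domain, not a field, with $[D:\overline{D}]\neq0$, then $\overline{D}$ is a DVR.
   Context: $\overline{D}$ is the integral closure of $D$ in its quotient field $K$; $[D:\overline{D}]=\{x\in K: x\overline{D}\subseteq D\}$. An API-domain is an integral domain in which for every nonempty subset $\{d_\alpha\}$ of nonzero elements there is $n$ with the ideal $(\{d_\alpha^n\})$ principal. $D\subseteq\overline D$ is a bounded root extension if there is a single natural number $n$ with $x^n\in D$ for all $x\in\overline D$. Quasilocal: unique maximal ideal. DVR: local PID not a field. *)

(* A domain D is modelled as a subring of its quotient field K. *)
From HB Require Import structures.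
From mathcomp Require Import all_boot all_order all_algebra.
Set Implicit Arguments. Unset Strict Implicit. Unset Printing Implicit Defensive.
Import Order.TTheory GRing.Theory Num.Theory.
Local Open Scope ring_scope.

Section Defs.
Variable K : fieldType.

Definition is_subring (A : K -> Prop) : Prop :=
  [/\ A 1, (forall x y, A x -> A y -> A (x - y)) & (forall x y, A x -> A y -> A (x * y))].

Definition is_quotient_field (A : K -> Prop) : Prop :=
  forall x : K, exists a b, [/\ A a, A b, b != 0 & x = a / b].

Definition int_closure (A : K -> Prop) : K -> Prop :=
  fun x => exists p : {poly K}, [/\ p \is monic, (forall i, A p`_i) & root p x].

Definition conductor (A B : K -> Prop) : K -> Prop :=
  fun x => forall y, B y -> A (x * y).

Definition gen_ideal (A S : K -> Prop) : K -> Prop :=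
  fun x => exists r : seq (K * K),
    (forall p, p \in r -> A p.1 /\ S p.2) /\ x = \sum_(p <- r) p.1 * p.2.

Definition is_ideal (A I : K -> Prop) : Prop :=
  [/\ (forall x, I x -> A x), I 0,
      (forall x y, I x -> I y -> I (x + y)) &
      (forall a x, A a -> I x -> I (a * x))].

Definition principal (A I : K -> Prop) : Prop :=
  exists g, A g /\ forall x, I x <-> exists a, A a /\ x = a * g.

Definition API (A : K -> Prop) : Prop :=
  forall S : K -> Prop, (exists s, S s) -> (forall s, S s -> A s /\ s != 0) ->
  exists n : nat, (0 < n)%N /\
    principal A (gen_ideal A (fun y => exists s, S s /\ y = s ^+ n)).

Definition bounded_root_ext (A B : K -> Prop) : Prop :=
  exists n : nat, (0 < n)%N /\ forall x, B x -> A (x ^+ n).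

Definition maximal_ideal (A M : K -> Prop) : Prop :=
  [/\ is_ideal A M, ~ M 1 &
      forall J, is_ideal A J -> (forall x, M x -> J x) -> ~ J 1 -> forall x, J x -> M x].

Definition quasilocal (A : K -> Prop) : Prop :=
  exists M, maximal_ideal A M /\ forall N, maximal_ideal A N -> forall x, N x <-> M x.

Definition is_field_sub (A : K -> Prop) : Prop :=
  forall x, A x -> x != 0 -> A x^-1.

Definition PID (A : K -> Prop) : Prop :=
  forall I, is_ideal A I -> principal A I.

Definition DVR (A : K -> Prop) : Prop :=
  [/\ quasilocal A, PID A & ~ is_field_sub A].

End Defs.

(* Let c be a nonzero element of the conductor. The API property applied to the elements c y,
   y integral and nonzero, yields n and g such that the D-module spanned by the n-th powers of
   integral elements is the fractional ideal h D, h = g / c^n. This module is closed under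
   products, so h^2 is in h D, whence h is in D and y^n is in h D, a subset of D, for every
   integral y. Along such a bounded root extension the API property passes to the integral
   closure, and so does non-fieldness backwards.
   If D is moreover quasilocal, write x = a / b and apply the API property to {a, b}: a^n and
   b^n are multiples of some g lying in the ideal (a^n, b^n), and locality makes one of the
   two resulting coefficients a unit, so x^n or x^-n lies in D. Hence the integral closure is
   a valuation ring, and there the API property makes every ideal principal: it is generated
   by an element t whose n-th power divides all the n-th powers used to write g. *)

From HB Require Import structures.
From mathcomp Require Import all_boot all_order all_algebra.
From mathcomp Require Import boolp classical_sets.
Set Implicit Arguments. Unset Strict Implicit. Unset Printing Implicit Defensive.
Import Order.TTheory GRing.Theory Num.Theory.
Local Open Scope ring_scope.

Section Subring.
Variables (K : fieldType) (A : K -> Prop).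

Definition divides (g x : K) := exists a, A a /\ x = a * g.

(* The condition x != 0 matters: 0^-1 = 0 lies in every subring. *)
Definition unit_in (x : K) := x != 0 /\ A x^-1.

Hypothesis hA : is_subring A.

Lemma subring1 : A 1. Proof. by case: hA. Qed.
Lemma subringB x y : A x -> A y -> A (x - y). Proof. by case: hA => _ hB _; apply: hB. Qed.
Lemma subringM x y : A x -> A y -> A (x * y). Proof. by case: hA => _ _ hM; apply: hM. Qed.
Lemma subring0 : A 0. Proof. by rewrite -(subrr 1); apply: subringB; apply: subring1. Qed.
Lemma subringN x : A x -> A (- x).
Proof. by move=> Ax; rewrite -sub0r; apply: subringB => //; apply: subring0. Qed.
Lemma subringD x y : A x -> A y -> A (x + y).
Proof. by move=> Ax Ay; rewrite -[y]opprK; apply: subringB => //; apply: subringN. Qed.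
Lemma subringX x n : A x -> A (x ^+ n).
Proof.
move=> Ax; elim: n => [|n IHn]; first by rewrite expr0; apply: subring1.
by rewrite exprS; apply: subringM.
Qed.

End Subring.

Section GeneratedIdeal.
Variables (K : fieldType) (A : K -> Prop).

Lemma gen_ideal_ind (S P : K -> Prop) :
  P 0 -> (forall u v, P u -> P v -> P (u + v)) ->
  (forall a s, A a -> S s -> P (a * s)) ->
  forall x, gen_ideal A S x -> P x.
Proof.
move=> P0 PD PM x [r [Hr ->]]; elim: r Hr => [|p r IHr] Hr; first by rewrite big_nil.
rewrite big_cons; apply: PD; last by apply: IHr => q qr; apply: Hr; rewrite inE qr orbT.
by have [] := Hr p (mem_head p r); apply: PM.
Qed.

Lemma gen_ideal_mono (B S T : K -> Prop) :
  (forall a, A a -> B a) -> (forall s, S s -> T s) ->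
  forall x, gen_ideal A S x -> gen_ideal B T x.
Proof.
move=> AB ST x [r [Hr ->]]; exists r; split=> // p /Hr[Ap Sp].
by split; [apply: AB | apply: ST].
Qed.

Variable S : K -> Prop.

Lemma gen_ideal0 : gen_ideal A S 0.
Proof. by exists [::]; rewrite big_nil. Qed.

Lemma gen_idealD x y : gen_ideal A S x -> gen_ideal A S y -> gen_ideal A S (x + y).
Proof.
move=> [r [Hr ->]] [q [Hq ->]]; exists (r ++ q); rewrite big_cat; split=> // p.
by rewrite mem_cat => /orP[/Hr | /Hq].
Qed.

Hypothesis hA : is_subring A.

Lemma gen_idealMl a x : A a -> gen_ideal A S x -> gen_ideal A S (a * x).
Proof.
move=> Aa [r [Hr ->]]; exists [seq (a * p.1, p.2) | p <- r]; split.
  by move=> _ /mapP[p /Hr[Ap Sp] ->]; split=> //; apply: subringM.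
by rewrite big_map mulr_sumr; apply: eq_bigr => p _; rewrite mulrA.
Qed.

Lemma gen_ideal_gen s : S s -> gen_ideal A S s.
Proof.
move=> Ss; exists [:: (1, s)]; rewrite big_seq1 mul1r; split=> // p.
by rewrite inE => /eqP -> /=; split=> //; apply: subring1.
Qed.

Lemma gen_idealM x y :
  (forall s t, S s -> S t -> S (s * t)) ->
  gen_ideal A S x -> gen_ideal A S y -> gen_ideal A S (x * y).
Proof.
move=> SM Ax Ay; move: x Ax.
apply: (gen_ideal_ind (P := fun x => gen_ideal A S (x * y))) => [|u v|a s Aa Ss].
- by rewrite mul0r; apply: gen_ideal0.
- by rewrite mulrDl; apply: gen_idealD.
rewrite -mulrA; apply: gen_idealMl => //; move: y Ay.
apply: (gen_ideal_ind (P := fun y => gen_ideal A S (s * y))) => [|u v|b t Ab St].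
- by rewrite mulr0; apply: gen_ideal0.
- by rewrite mulrDr; apply: gen_idealD.
by rewrite mulrCA; apply: gen_idealMl => //; apply: gen_ideal_gen; apply: SM.
Qed.

Lemma gen_ideal_divides g :
  (forall s, S s -> divides A g s) -> forall x, gen_ideal A S x -> divides A g x.
Proof.
move=> Sg; apply: gen_ideal_ind => [|u v [a [Aa ->]] [b [Ab ->]]|a s Aa /Sg[b [Ab ->]]].
- by exists 0; split; [apply: subring0 | rewrite mul0r].
- by exists (a + b); split; [apply: subringD | rewrite mulrDl].
by exists (a * b); split; [apply: subringM | rewrite mulrA].
Qed.

Lemma principal_gen_idealP :
  principal A (gen_ideal A S) <->
  exists g, [/\ A g, gen_ideal A S g & forall s, S s -> divides A g s].
Proof.
split=> [[g [Ag Hg]]|[g [Ag Sg gS]]].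
  exists g; split=> // [|s Ss]; last exact/Hg/gen_ideal_gen.
  by apply/Hg; exists 1; rewrite mul1r; split=> //; apply: subring1.
exists g; split=> // x; split; first exact: gen_ideal_divides.
by move=> [a [Aa ->]]; apply: gen_idealMl.
Qed.

Lemma gen_ideal_mulr_closed_sub h :
  (forall s t, S s -> S t -> S (s * t)) -> h != 0 ->
  gen_ideal A S h -> (forall s, S s -> divides A h s) -> forall s, S s -> A s.
Proof.
move=> SM h0 Sh Sdvd; have [a [Aa hh]] := gen_ideal_divides Sdvd (gen_idealM SM Sh Sh).
have Ah : A h by rewrite (mulIf h0 hh).
by move=> s /Sdvd[b [Ab ->]]; apply: subringM.
Qed.

End GeneratedIdeal.

Lemma gen_ideal2 (K : fieldType) (A : K -> Prop) y z x : is_subring A ->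
  gen_ideal A (fun s => s = y \/ s = z) x -> exists u w, [/\ A u, A w & x = u * y + w * z].
Proof.
move=> hA; move: x.
apply: (gen_ideal_ind (P := fun x => exists u w, [/\ A u, A w & x = u * y + w * z])).
- by exists 0, 0; rewrite !mul0r addr0; split=> //; apply: subring0.
- move=> _ _ [u [w [Au Aw ->]]] [u' [w' [Au' Aw' ->]]].
  exists (u + u'), (w + w'); rewrite !mulrDl addrACA.
  by split=> //; apply: subringD.
move=> a s Aa [] ->; [exists a, 0 | exists 0, a]; rewrite mul0r ?addr0 ?add0r.
  by split=> //; apply: subring0.
by split=> //; apply: subring0.
Qed.

Section IntegralClosure.
Variables (K : fieldType) (A : K -> Prop).
Hypothesis hA : is_subring A.
Local Notation V := (int_closure A).

Definition subring_pred : {pred K} := fun x => `[< A x >].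

Lemma subring_predE x : (x \in subring_pred) = `[< A x >].
Proof. by rewrite unfold_in. Qed.

Lemma subring_pred_closed : subring_closed subring_pred.
Proof.
split=> [|x y|x y]; rewrite !subring_predE.
- by apply/asboolP; apply: subring1.
- by move=> /asboolP Ax /asboolP Ay; apply/asboolP; apply: subringB.
- by move=> /asboolP Ax /asboolP Ay; apply/asboolP; apply: subringM.
Qed.

HB.instance Definition _ := GRing.isSubringClosed.Build K subring_pred subring_pred_closed.
Record subring_type := SubringType { subring_val : K; _ : subring_val \in subring_pred }.
HB.instance Definition _ := [isSub for subring_val].
HB.instance Definition _ := [Choice of subring_type by <:].
HB.instance Definition _ := [SubChoice_isSubComNzRing of subring_type by <:].

Lemma int_closureE x : V x <-> integralOver (val : subring_type -> K) x.
Proof.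
split=> [[p [mp Ap rp]]|[q mq rq]].
  pose q : {poly subring_type} := \poly_(i < size p) insubd 0 p`_i.
  have qp : map_poly val q = p.
    apply/polyP => i; rewrite coef_map coef_poly.
    case: ltnP => [_|hi]; last by rewrite nth_default.
    by rewrite /= insubdK // subring_predE; apply/asboolP; apply: Ap.
  exists q; last by rewrite qp.
  apply/monicP/val_inj; rewrite -lead_coef_map_inj ?qp //; first exact/monicP.
  exact: val_inj.
exists (map_poly val q); split=> // [|i]; first exact: monic_map.
by rewrite coef_map; apply/asboolP; rewrite -subring_predE; apply: valP.
Qed.

Lemma int_closure_sub x : A x -> V x.
Proof.
move=> Ax; apply/int_closureE.
have -> : x = val (insubd (0 : subring_type) x).
  by rewrite insubdK // subring_predE; apply/asboolP.
exact: integral_id.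
Qed.

Lemma int_closure_subring : is_subring V.
Proof.
split=> [|x y|x y]; first by apply: int_closure_sub; apply: subring1.
  by move=> /int_closureE Vx /int_closureE Vy; apply/int_closureE/integral_sub.
by move=> /int_closureE Vx /int_closureE Vy; apply/int_closureE/integral_mul.
Qed.

Lemma int_closure_root x k : (0 < k)%N -> V (x ^+ k) -> V x.
Proof.
move=> k_gt0 Vxk; apply/int_closureE.
apply: (integral_root_monic (p := 'X^k - (x ^+ k)%:P)); first exact: monicXnsubC.
  by rewrite /root !hornerE subrr.
move=> y /(nthP 0)[i _ <-]; apply/int_closureE.
rewrite coefB coefXn coefC; apply: subringB; first exact: int_closure_subring.
  by case: (i == k); [apply: subring1 | apply: subring0]; apply: int_closure_subring.
by case: (i == 0)%N => //; apply: subring0; apply: int_closure_subring.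
Qed.

End IntegralClosure.

Lemma API_conductor_bounded_root (K : fieldType) (A : K -> Prop) c :
  is_subring A -> API A -> conductor A (int_closure A) c -> c != 0 ->
  bounded_root_ext A (int_closure A).
Proof.
move=> hA hAPI Ac c0; have hV := int_closure_subring hA.
have V1 : int_closure A 1 := subring1 hV.
pose S s := exists y, [/\ int_closure A y, y != 0 & s = c * y].
have [|s [y [Vy y0 ->]]|n [n_gt0 /principal_gen_idealP]] := hAPI S.
- by exists c, 1; split; rewrite ?mulr1 ?oner_neq0.
- by split; [apply: Ac | apply: mulf_neq0].
move=> /(_ hA)[g [Ag gS Sg]].
have cn0 : c ^+ n != 0 by apply: expf_neq0.
have g0 : g != 0.
  have [|a [_ cng]] := Sg (c ^+ n).
    by exists c; split=> //; exists 1; split; rewrite ?mulr1 ?oner_neq0.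
  by apply: contraNneq cn0 => g0; rewrite cng g0 mulr0.
pose Vn z := exists y, int_closure A y /\ z = y ^+ n.
have VnM s t : Vn s -> Vn t -> Vn (s * t).
  move=> [u [Vu ->]] [v [Vv ->]]; exists (u * v).
  by rewrite exprMn; split=> //; apply: subringM.
pose h := g / c ^+ n.
have Vn_h : gen_ideal A Vn h.
  apply: (gen_ideal_ind (P := fun x => gen_ideal A Vn (x / c ^+ n)) _ _ _ gS) => [|u v|a s Aa].
  - by rewrite mul0r; apply: gen_ideal0.
  - by rewrite mulrDl; apply: gen_idealD.
  move=> [_ [[y [Vy _ ->]] ->]]; rewrite -mulrA exprMn mulrAC mulfV // mul1r.
  by apply: gen_idealMl => //; apply: gen_ideal_gen => //; exists y.
have h_dvd_Vn s : Vn s -> divides A h s.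
  move=> [y [Vy ->]]; have [->|y0] := eqVneq y 0.
    by exists 0; rewrite expr0n gtn_eqF // mul0r; split=> //; apply: subring0.
  have [|a [Aa Ea]] := Sg ((c * y) ^+ n); first by exists (c * y); split=> //; exists y.
  by exists a; split=> //; rewrite /h mulrA -Ea exprMn mulrAC mulfV ?mul1r.
exists n; split=> // x Vx; apply: (gen_ideal_mulr_closed_sub hA VnM _ Vn_h h_dvd_Vn).
  by rewrite mulf_neq0 // invr_eq0.
by exists x.
Qed.

Lemma API_bounded_root_ext (K : fieldType) (A B : K -> Prop) :
  is_subring A -> is_subring B -> (forall x, A x -> B x) ->
  bounded_root_ext A B -> API A -> API B.
Proof.
move=> hA hB AB [m [m_gt0 Bm]] hAPI S [s0 Ss0] SB.
have [|t [s [Ss ->]]|n [n_gt0 /principal_gen_idealP]] :=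
  hAPI (fun t => exists s, S s /\ t = s ^+ m).
- by exists (s0 ^+ m), s0.
- by have [Bs s0'] := SB s Ss; split; [apply: Bm | apply: expf_neq0].
move=> /(_ hA)[g [Ag gS Sg]].
exists (m * n)%N; split; first by rewrite muln_gt0 m_gt0.
apply/principal_gen_idealP => //; exists g; split; first exact: AB.
  by apply: gen_ideal_mono gS => // x [t [[s [Ss ->]] ->]]; exists s; rewrite exprM.
move=> _ [s [Ss ->]]; rewrite exprM.
have [|a [Aa ->]] := Sg (s ^+ m ^+ n); first by exists (s ^+ m); split=> //; exists s.
by exists a; split=> //; apply: AB.
Qed.

Lemma bounded_root_ext_field (K : fieldType) (A B : K -> Prop) :
  is_subring A -> (forall x, A x -> B x) -> bounded_root_ext A B ->
  is_field_sub B -> is_field_sub A.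
Proof.
move=> hA AB [[|m] [// _ Bm]] Bfield x Ax x0.
have /Bm Ax' : B x^-1 by apply: Bfield => //; apply: AB.
have -> : x^-1 = x ^+ m * x^-1 ^+ m.+1.
  by rewrite exprSr mulrA -exprMn mulfV // expr1n mul1r.
by apply: subringM => //; apply: subringX.
Qed.

Section Quasilocal.
Variables (K : fieldType) (A : K -> Prop).
Hypothesis hA : is_subring A.

Lemma divides_ideal g : A g -> is_ideal A (divides A g).
Proof.
move=> Ag; split=> [_ [a [Aa ->]]|| _ _ [a [Aa ->]] [b [Ab ->]]| a _ Aa [b [Ab ->]]].
- exact: subringM.
- by exists 0; split; [apply: subring0 | rewrite mul0r].
- by exists (a + b); split; [apply: subringD | rewrite mulrDl].
by exists (a * b); split; [apply: subringM | rewrite mulrA].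
Qed.

Lemma proper_ideal_chain_bigcup x (F : set (set K)) :
  (forall I, F I -> I = set0 \/ [/\ is_ideal A I, ~ I 1 & I x]) -> total_on F subset ->
  let U := (\bigcup_(I in F) I)%classic in U = set0 \/ [/\ is_ideal A U, ~ U 1 & U x].
Proof.
move=> FP Ftot U.
have [[I0 [FI0 [y0 I0y0]]]|Fempty] := pselect (exists I, F I /\ exists y, I y); last first.
  left; apply/seteqP; split=> // y [I FI Iy].
  by apply: Fempty; exists I; split=> //; exists y.
have idealF I y : F I -> I y -> [/\ is_ideal A I, ~ I 1 & I x].
  by move=> FI Iy; case: (FP I FI) => // I_empty; rewrite I_empty in Iy.
have [[_ I0_0 _ _] _ I0x] := idealF I0 y0 FI0 I0y0.
right; split; last 2 first.
- by move=> [I FI I1]; have [] := idealF I 1 FI I1.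
- by exists I0.
split=> [y [I FI Iy]|| y z [I FI Iy] [J FJ Jz]| a y Aa [I FI Iy]].
- by have [[IA _ _ _] _ _] := idealF I y FI Iy; apply: IA.
- by exists I0.
- have [[_ _ ID _] _ _] := idealF I y FI Iy; have [[_ _ JD _] _ _] := idealF J z FJ Jz.
  case: (Ftot I J FI FJ) => [IJ|JI]; first by exists J => //; apply: JD => //; apply: IJ.
  by exists I => //; apply: ID => //; apply: JI.
by have [[_ _ _ IM] _ _] := idealF I y FI Iy; exists I => //; apply: IM.
Qed.

Lemma nonunit_maximal_ideal x : A x -> ~ unit_in A x ->
  exists M, maximal_ideal A M /\ M x.
Proof.
move=> Ax nux.
(* Zorn's lemma also sees the empty chain, whose union is empty. *)
have [F FP Ftot|I [PI Imax]] :=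
  @Zorn_bigcup K (fun I => I = set0 \/ [/\ is_ideal A I, ~ I 1 & I x]).
  exact: proper_ideal_chain_bigcup.
have xA1 : ~ divides A x 1.
  move=> [d [Ad dx]]; apply: nux.
  have x0 : x != 0 by apply: contra_eq_neq dx => ->; rewrite mulr0 oner_neq0.
  by split=> //; rewrite (_ : x^-1 = d) //; apply: (mulIf x0); rewrite mulVf.
have xAx : divides A x x by exists 1; split; [apply: subring1 | rewrite mul1r].
case: PI => [I0|[I_ideal I1 Ix]].
  exfalso; apply: (Imax (divides A x)); first by rewrite I0; split=> // /(_ x xAx).
  by right; split=> //; apply: divides_ideal.
exists I; split=> //; split=> // J J_ideal IJ J1 y Jy.
apply/not_notP => Iy; apply: (Imax J); first by split=> // /(_ y Jy).
by right; split=> //; apply: IJ.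
Qed.

Lemma quasilocal_unit_sum u v : quasilocal A -> A u -> A v -> u + v = 1 ->
  unit_in A u \/ unit_in A v.
Proof.
move=> [M [[[_ _ MD _] M1 _] Muniq]] Au Av uv1.
have inM y : A y -> ~ unit_in A y -> M y.
  move=> Ay /(nonunit_maximal_ideal Ay)[N [mN Ny]]; exact/(Muniq N mN).
apply/not_notP => nuv; apply: M1; rewrite -uv1.
by apply: MD; apply: inM => // nu; apply: nuv; [left | right].
Qed.

Lemma unit_in_mul_div u c d : A u -> A d -> unit_in A (u * c) -> A (d / c).
Proof.
move=> Au Ad [uc0 Auc']; move: (uc0); rewrite mulf_eq0 negb_or => /andP[u0 c0].
have -> : d / c = d * u * (u * c)^-1 by rewrite invfM mulrA mulfK.
by apply: subringM => //; apply: subringM.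
Qed.

End Quasilocal.

Lemma API_quasilocal_valuation (K : fieldType) (A : K -> Prop) :
  is_subring A -> is_quotient_field A -> API A -> quasilocal A ->
  forall x, int_closure A x \/ int_closure A x^-1.
Proof.
move=> hA hQ hAPI hloc x.
have [->|x0] := eqVneq x 0; first by left; apply: int_closure_sub; [|apply: subring0].
have [a [b [Aa Ab b0 Ex]]] := hQ x; rewrite Ex invf_div.
have a0 : a != 0 by apply: contraNneq x0 => a0; rewrite Ex a0 mul0r.
have [|s [->|->] //|n [n_gt0 /principal_gen_idealP]] := hAPI (fun s => s = a \/ s = b).
  by exists a; left.
move=> /(_ hA)[g [Ag gab abg]].
have [al [Aal Ea]] : divides A g (a ^+ n) by apply: abg; exists a; split=> //; left.
have [be [Abe Eb]] : divides A g (b ^+ n) by apply: abg; exists b; split=> //; right.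
have g0 : g != 0 by apply: contraNneq (expf_neq0 n a0) => g0; rewrite Ea g0 mulr0.
have [u [w [Au Aw Eg]]] : exists u w, [/\ A u, A w & g = u * a ^+ n + w * b ^+ n].
  apply: gen_ideal2 => //; apply: gen_ideal_mono gab => // _ [s [[->|->] ->]].
  - by left.
  - by right.
have uw1 : u * al + w * be = 1.
  by apply: (mulIf g0); rewrite mul1r mulrDl -!mulrA -Ea -Eb Eg.
have ratio_pow y z c d : y ^+ n = c * g -> z ^+ n = d * g -> (y / z) ^+ n = c / d.
  by move=> Ey Ez; rewrite expr_div_n Ey Ez invfM mulrACA mulfV // mulr1.
have [ual|wbe] := quasilocal_unit_sum hA hloc (subringM hA Au Aal) (subringM hA Aw Abe) uw1.
- right; apply: (int_closure_root hA n_gt0); apply: int_closure_sub => //.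
  by rewrite (ratio_pow _ _ _ _ Eb Ea); apply: (unit_in_mul_div hA Au Abe).
- left; apply: (int_closure_root hA n_gt0); apply: int_closure_sub => //.
  by rewrite (ratio_pow _ _ _ _ Ea Eb); apply: (unit_in_mul_div hA Aw Aal).
Qed.

Section ValuationRing.
Variables (K : fieldType) (V : K -> Prop).
Hypotheses (hV : is_subring V) (hval : forall x, V x \/ V x^-1).

Lemma valuation_root x k : (0 < k)%N -> V (x ^+ k) -> V x.
Proof.
case: k => // k _ Vxk; have [//|Vx'] := hval x.
have [->|x0] := eqVneq x 0; first exact: subring0.
have -> : x = x ^+ k.+1 * x^-1 ^+ k by rewrite exprS -mulrA -exprMn mulfV // expr1n mulr1.
by apply: subringM => //; apply: subringX.
Qed.

Definition nonunits x := V x /\ ~ unit_in V x.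

Lemma proper_ideal_nonunits J : is_ideal V J -> ~ J 1 -> forall x, J x -> nonunits x.
Proof.
move=> [JV _ _ JM] J1 x Jx; split=> [|[x0 Vx']]; first exact: JV.
by apply: J1; rewrite -(mulVf x0); apply: JM.
Qed.

Lemma nonunits1 : ~ nonunits 1.
Proof. by case=> _; apply; rewrite /unit_in invr1 oner_neq0; split=> //; apply: subring1. Qed.

Lemma nonunitsD x y : nonunits x -> nonunits y -> nonunits (x + y).
Proof.
wlog yx : x y / V (y / x).
  move=> IH Mx My; have [|] := hval (y / x); first by move/IH; apply.
  by rewrite invf_div addrC => /IH; apply.
move=> [Vx nux] [Vy nuy]; split=> [|[xy0 Vxy']]; first exact: subringD.
have [x0|x0] := eqVneq x 0; first by apply: nuy; rewrite -[y]add0r -x0.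
apply: nux; split=> //.
have -> : x^-1 = (1 + y / x) * (x + y)^-1 by rewrite -(mulfV x0) -mulrDl mulrAC mulfV ?mul1r.
by apply: subringM => //; apply: subringD => //; apply: subring1.
Qed.

Lemma nonunitsM a x : V a -> nonunits x -> nonunits (a * x).
Proof.
move=> Va [Vx nux]; split=> [|[ax0 Vax']]; first exact: subringM.
apply: nux; move: ax0; rewrite mulf_eq0 negb_or => /andP[a0 x0].
split=> //; have -> : x^-1 = a * (a * x)^-1 by rewrite invfM mulrA mulfV ?mul1r.
exact: subringM.
Qed.

Lemma nonunits_ideal : is_ideal V nonunits.
Proof.
split=> [x []//||x y|a x]; [|exact: nonunitsD|exact: nonunitsM].
by split; [apply: subring0 | case; rewrite eqxx].
Qed.

Lemma valuation_quasilocal : quasilocal V.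
Proof.
have nonunits_max : maximal_ideal V nonunits.
  split=> [|| J J_ideal _ J1]; [exact: nonunits_ideal | exact: nonunits1 |].
  exact: proper_ideal_nonunits.
exists nonunits; split=> // N [N_ideal N1 Nmax] x; split; first exact: proper_ideal_nonunits.
apply: Nmax => //; [exact: nonunits_ideal | exact: proper_ideal_nonunits | exact: nonunits1].
Qed.

Lemma valuation_gen_ideal_divisor (S : K -> Prop) s0 x :
  (forall s, S s -> s != 0) -> S s0 -> gen_ideal V S x -> exists t, S t /\ V (x / t).
Proof.
move=> S0 Ss0; move: x.
apply: (gen_ideal_ind (P := fun x => exists t, S t /\ V (x / t))).
- by exists s0; rewrite mul0r; split=> //; apply: subring0.
- move=> u v [s [Ss Vus]] [t [St Vvt]]; have [Vst|] := hval (s / t).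
    exists t; split=> //; rewrite mulrDl; apply: subringD => //.
    have -> : u / t = u / s * (s / t) by rewrite mulrA mulfVK // S0.
    exact: subringM.
  rewrite invf_div => Vts; exists s; split=> //; rewrite mulrDl; apply: subringD => //.
  have -> : v / s = v / t * (t / s) by rewrite mulrA mulfVK // S0.
  exact: subringM.
by move=> a s Va Ss; exists s; rewrite -mulrA mulfV ?mulr1 //; apply: S0.
Qed.

Lemma valuation_API_PID : API V -> PID V.
Proof.
move=> hAPI I I_ideal; have [IV I0 _ IM] := I_ideal.
have [[s0 [Is0 s00]]|Izero] := pselect (exists s, I s /\ s != 0); last first.
  exists 0; split=> [|x]; first exact: subring0.
  split=> [Ix|[a [_ ->]]]; last by rewrite mulr0.
  exists 0; rewrite mulr0; split; first exact: subring0.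
  by apply/eqP/negPn/negP => x0; apply: Izero; exists x.
have [|s [Is s_neq0]|n [n_gt0 /principal_gen_idealP]] := hAPI (fun s => I s /\ s != 0).
- by exists s0.
- by split=> //; apply: IV.
move=> /(_ hV)[g [Vg gI Ig]].
have [_ [[t [[It t0] ->]] Vgt]] :
    exists y, (exists t, (I t /\ t != 0) /\ y = t ^+ n) /\ V (g / y).
  apply: (@valuation_gen_ideal_divisor _ (s0 ^+ n) g) => //.
    by move=> _ [s [[_ s_neq0] ->]]; apply: expf_neq0.
  by exists s0.
exists t; split=> [|x]; first exact: IV.
split=> [Ix|[a [Va ->]]]; last exact: IM.
exists (x / t); rewrite mulfVK //; split=> //.
have [->|x0] := eqVneq x 0; first by rewrite mul0r; apply: subring0.
have [|b [Vb Exg]] := Ig (x ^+ n); first by exists x.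
apply: (valuation_root n_gt0).
by rewrite expr_div_n Exg -mulrA; apply: subringM.
Qed.

End ValuationRing.

Unset Implicit Arguments.

Theorem theorem4 (K : fieldType) (D : K -> Prop) :
  is_subring D -> is_quotient_field D -> API D ->
  (exists c, conductor D (int_closure D) c /\ c != 0) ->
  [/\ bounded_root_ext D (int_closure D),
      API (int_closure D) &
      (quasilocal D -> ~ is_field_sub D -> DVR (int_closure D))].
Proof.
move=> hD hQ hAPI [c [hc c0]].
have hV := int_closure_subring hD.
have bounded := API_conductor_bounded_root hD hAPI hc c0.
have APIV := API_bounded_root_ext hD hV (int_closure_sub hD) bounded hAPI.
split=> // hloc Dnotfield.
have hval := API_quasilocal_valuation hD hQ hAPI hloc.
split; [exact: valuation_quasilocal | exact: valuation_API_PID |].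
exact: contra_not (bounded_root_ext_field hD (int_closure_sub hD) bounded) Dnotfield.
Qed.
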